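(* For all integers $n,k\ge1$, $$\frac{L_2(k)}{n^k}<\sum_{t=k}^\infty\frac{g_{e,2}(t)}{n^t}<\frac{U_2(k)}{n^k},$$ where $L_2(k)=\left(-\frac{24\cosh\alpha}{23}-\frac{12}{5\sqrt{k+1}}\right)24^{-k}$ and $U_2(k)=\left(-\cosh\alpha+\frac{4\sqrt2\sinh\alpha}{\alpha}\sqrt{k+1}+\frac{66}{25\sqrt{k+1}}\right)24^{-k}$.
   Context: $\alpha=\pi/6$. $(a)_m=a(a+1)\cdots(a+m-1)$ is the rising factorial ($(a)_0=1$); $\binom{x}{m}=x(x-1)\cdots(x-m+1)/m!$ for $m\ge1$, $\binom{x}{0}=1$. For $t\ge1$, $$S_2(t)=\sum_{s=0}^{t-1}(1/2-s)_{s+1}\binom{-3/2}{t-s-1}\sum_{u=0}^s\frac{(-1)^u(-s)_u}{(s+u+1)!\,(2u)!}\left(\frac{\pi^2}{36}\right)^u,\qquad g_{e,2}(t)=\frac{(-1)^{t-1}}{24^t}S_2(t).$$ *)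

From Stdlib Require Import Reals Arith.
From Coquelicot Require Import Coquelicot.
Open Scope R_scope.

Fixpoint fsum (n : nat) (f : nat -> R) : R :=
  match n with O => 0 | S m => fsum m f + f m end.

Fixpoint fprod (n : nat) (f : nat -> R) : R :=
  match n with O => 1 | S m => fprod m f * f m end.

Definition rising (a : R) (m : nat) : R := fprod m (fun i => a + INR i).

Definition gbinom (x : R) (m : nat) : R :=
  fprod m (fun i => x - INR i) / INR (Factorial.fact m).

Definition alpha : R := PI / 6.

Definition S2 (t : nat) : R :=
  fsum t (fun s =>
    rising (1/2 - INR s) (s + 1) * gbinom (-3/2) (t - s - 1) *
    fsum (s + 1) (fun u =>
      (-1) ^ u * rising (- INR s) u
        / (INR (Factorial.fact (s + u + 1)) * INR (Factorial.fact (2 * u)))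
        * (PI ^ 2 / 36) ^ u)).

Definition g_e2 (t : nat) : R := (-1) ^ (t - 1) / 24 ^ t * S2 t.

Definition L2 (k : nat) : R :=
  (- (24 * cosh alpha / 23) - 12 / (5 * sqrt (INR k + 1))) / 24 ^ k.

Definition U2 (k : nat) : R :=
  (- cosh alpha + 4 * sqrt 2 * sinh alpha / alpha * sqrt (INR k + 1)
     + 66 / (25 * sqrt (INR k + 1))) / 24 ^ k.

(* the tail series  sum_{t >= k} g_e2 t / n^t, reindexed t = k + j *)
Definition tail_term (n k : nat) (j : nat) : R := g_e2 (k + j) / INR n ^ (k + j).

From Stdlib Require Import Reals Lra Lia Psatz.
From Coquelicot Require Import Coquelicot.
Open Scope R_scope.

(* Pulling the signs out, (-1)^(t-1) S2(t) is a convolution of the positive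
   sequences (1/2)_s / 2 and (3/2)_m / m! with an alternating inner sum in
   x = pi^2/36 <= 4/9 whose terms decrease in absolute value, so the inner sum
   lies in [0, (9/5)/(s+1)!].  Hence every g_{e,2}(t) is positive, and the tail
   beats the negative L2(k) trivially.  For the upper bound, ((3/2)_m/m!)^2 <= 2m+1
   and the telescoping identity sum_{s<t} (1/2)_s/(2 (s+1)!) <= 1 give
   g_{e,2}(t) <= (9/5) sqrt(2t) / 24^t; since sqrt(2(k+j)) <= sqrt(2(k+1)) 2^j,
   the tail is dominated by a geometric series of ratio 1/12, whose sum
   (108/55) sqrt(2(k+1)) / (24 n)^k is below U2(k)/n^k because cosh alpha <= 2
   and sinh alpha / alpha >= 4/5. *)

Lemma fsum_ext n f g : (forall i, (i < n)%nat -> f i = g i) -> fsum n f = fsum n g.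
Proof.
  induction n as [|n IH]; intros H; simpl; [reflexivity|].
  rewrite IH by (intros; apply H; lia). rewrite H by lia. reflexivity.
Qed.

Lemma fsum_le n f g : (forall i, (i < n)%nat -> f i <= g i) -> fsum n f <= fsum n g.
Proof.
  induction n as [|n IH]; intros H; simpl; [lra|].
  assert (f n <= g n) by (apply H; lia).
  assert (fsum n f <= fsum n g) by (apply IH; intros; apply H; lia).
  lra.
Qed.

Lemma fsum_nonneg n f : (forall i, (i < n)%nat -> 0 <= f i) -> 0 <= fsum n f.
Proof.
  intros H. apply Rle_trans with (fsum n (fun _ => 0)).
  - clear. induction n; simpl; lra.
  - now apply fsum_le.
Qed.

Lemma fsum_scal_l n c f : fsum n (fun i => c * f i) = c * fsum n f.
Proof. induction n as [|n IH]; simpl; [ring|]. rewrite IH. ring. Qed.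

Lemma fsum_geom n q : fsum n (fun u => q ^ u) * (1 - q) = 1 - q ^ n.
Proof. induction n as [|n IH]; simpl; [ring|]. rewrite Rmult_plus_distr_r, IH. ring. Qed.

Lemma rising_recr x m : rising x (S m) = rising x m * (x + INR m).
Proof. reflexivity. Qed.

Lemma rising_recl x m : rising x (S m) = x * rising (x + 1) m.
Proof.
  induction m as [|m IH].
  - unfold rising; simpl. ring.
  - rewrite rising_recr, IH, rising_recr, S_INR. ring.
Qed.

Lemma fact_INR_pos n : 0 < INR (Factorial.fact n).
Proof. apply lt_0_INR, Factorial.lt_O_fact. Qed.

Lemma fact_INR_S n : INR (Factorial.fact (S n)) = (INR n + 1) * INR (Factorial.fact n).
Proof. change (Factorial.fact (S n)) with (S n * Factorial.fact n)%nat. now rewrite mult_INR, S_INR. Qed.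

(* The sign-normalised factors of S2: acoef s = (1/2)_s / 2 and bcoef m = (3/2)_m / m!. *)
Definition acoef (s : nat) : R := (-1) ^ s * rising (1/2 - INR s) (s + 1).
Definition bcoef (m : nat) : R := (-1) ^ m * gbinom (-3/2) m.

Lemma acoef_0 : acoef 0 = 1/2.
Proof. unfold acoef, rising; simpl. ring. Qed.

Lemma acoef_S s : acoef (S s) = acoef s * (INR s + 1/2).
Proof.
  unfold acoef. replace (S s + 1)%nat with (S (s + 1)) by lia.
  rewrite rising_recl, S_INR.
  replace (1 / 2 - (INR s + 1) + 1) with (1/2 - INR s) by ring.
  simpl. set (r := rising _ _). field.
Qed.

Lemma acoef_pos s : 0 < acoef s.
Proof.
  induction s as [|s IH]; [rewrite acoef_0; lra|].
  rewrite acoef_S. pose proof (pos_INR s). nra.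
Qed.

Lemma bcoef_0 : bcoef 0 = 1.
Proof. unfold bcoef, gbinom; simpl. field. Qed.

Lemma bcoef_S m : bcoef (S m) = bcoef m * (INR m + 3/2) / (INR m + 1).
Proof.
  unfold bcoef, gbinom. cbn [fprod pow]. rewrite fact_INR_S.
  pose proof (fact_INR_pos m). pose proof (pos_INR m).
  field. lra.
Qed.

Lemma bcoef_pos m : 0 < bcoef m.
Proof.
  induction m as [|m IH]; [rewrite bcoef_0; lra|].
  rewrite bcoef_S. pose proof (pos_INR m). apply Rdiv_lt_0_compat; nra.
Qed.

Lemma bcoef_sq_le m : bcoef m * bcoef m <= 2 * INR m + 1.
Proof.
  induction m as [|m IH]; [rewrite bcoef_0; simpl; lra|].
  rewrite bcoef_S, S_INR. pose proof (pos_INR m).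
  set (b := bcoef m) in *. set (x := INR m) in *.
  replace (b * (x + 3/2) / (x + 1) * (b * (x + 3/2) / (x + 1)))
    with (b * b * ((x + 3/2) * (x + 3/2)) / ((x + 1) * (x + 1))) by (field; lra).
  apply Rmult_le_reg_r with ((x + 1) * (x + 1)); [nra|].
  unfold Rdiv. rewrite Rmult_assoc, Rinv_l by nra. nra.
Qed.

Lemma bcoef_le_sqrt m : bcoef m <= sqrt (2 * INR m + 1).
Proof.
  rewrite <- (sqrt_square (bcoef m)) by (left; apply bcoef_pos).
  apply sqrt_le_1_alt, bcoef_sq_le.
Qed.

Definition afrac (s : nat) : R := acoef s / INR (Factorial.fact (s + 1)).

Lemma afrac_pos s : 0 < afrac s.
Proof. apply Rdiv_lt_0_compat; [apply acoef_pos | apply fact_INR_pos]. Qed.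

Lemma afrac_S s : afrac (S s) * (2 * INR s + 4) = afrac s * (2 * INR s + 1).
Proof.
  unfold afrac. rewrite acoef_S. replace (S s + 1)%nat with (S (s + 1)) by lia.
  rewrite fact_INR_S, plus_INR. simpl INR.
  pose proof (fact_INR_pos (s + 1)). pose proof (pos_INR s).
  field. lra.
Qed.

Lemma fsum_afrac t : fsum t afrac + (2 * INR t + 2) * afrac t = 1.
Proof.
  induction t as [|t IH].
  - unfold afrac. simpl. rewrite acoef_0. simpl. field.
  - simpl fsum. rewrite S_INR.
    replace ((2 * (INR t + 1) + 2) * afrac (S t)) with (afrac (S t) * (2 * INR t + 4)) by ring.
    rewrite afrac_S. lra.
Qed.

Lemma fsum_afrac_le1 t : fsum t afrac <= 1.
Proof.
  pose proof (fsum_afrac t). pose proof (afrac_pos t). pose proof (pos_INR t). nra.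
Qed.

Definition S2_inner (s : nat) : R :=
  fsum (s + 1) (fun u =>
    (-1) ^ u * rising (- INR s) u
      / (INR (Factorial.fact (s + u + 1)) * INR (Factorial.fact (2 * u)))
      * (PI ^ 2 / 36) ^ u).

Definition inner_coef (s u : nat) : R :=
  (-1) ^ u * rising (- INR s) u / INR (Factorial.fact (s + u + 1)).

Lemma inner_coef_S s u :
  inner_coef s (S u) = inner_coef s u * (INR s - INR u) / (INR s + INR u + 2).
Proof.
  unfold inner_coef. rewrite rising_recr.
  replace (s + S u + 1)%nat with (S (s + u + 1)) by lia.
  rewrite fact_INR_S, !plus_INR. simpl INR.
  pose proof (fact_INR_pos (s + u + 1)). pose proof (pos_INR s). pose proof (pos_INR u).
  change ((-1) ^ S u) with (-1 * (-1) ^ u).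
  set (r := rising _ _). set (p := (-1) ^ u). clearbody r p.
  field. split; lra.
Qed.

(* For u <= s the ratio (s-u)/(s+u+2) lies in [0,1]: the coefficients decrease. *)
Lemma inner_coef_bound s u : (u <= s)%nat ->
  0 <= inner_coef s u <= / INR (Factorial.fact (s + 1)).
Proof.
  induction u as [|u IH]; intros Hu.
  - unfold inner_coef, rising; simpl. replace (s + 0 + 1)%nat with (s + 1)%nat by lia.
    pose proof (fact_INR_pos (s + 1)).
    replace (1 * 1 / INR (Factorial.fact (s + 1))) with (/ INR (Factorial.fact (s + 1))) by (field; lra).
    split; [left; apply Rinv_0_lt_compat|]; lra.
  - destruct IH as [H0 H1]; [lia|]. rewrite inner_coef_S.
    assert (INR u + 1 <= INR s) by (rewrite <- S_INR; apply le_INR; lia).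
    pose proof (pos_INR u).
    assert (Hq : 0 <= (INR s - INR u) / (INR s + INR u + 2) <= 1).
    { split; [apply Rdiv_le_0_compat; lra|].
      apply Rmult_le_reg_r with (INR s + INR u + 2); [lra|].
      unfold Rdiv. rewrite Rmult_assoc, Rinv_l by lra. lra. }
    unfold Rdiv in *. rewrite Rmult_assoc. nra.
Qed.

Lemma pi2_36_bound : 0 <= PI ^ 2 / 36 <= 4/9.
Proof.
  pose proof PI_4. pose proof PI_RGT_0.
  split; [apply Rdiv_le_0_compat; nra|]. simpl. nra.
Qed.

Lemma S2_inner_bound s : 0 <= S2_inner s <= 9/5 / INR (Factorial.fact (s + 1)).
Proof.
  pose proof pi2_36_bound as [X0 X1]. pose proof (fact_INR_pos (s + 1)).
  assert (Hterm : forall u, (u < s + 1)%nat ->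
     0 <= (-1) ^ u * rising (- INR s) u
        / (INR (Factorial.fact (s + u + 1)) * INR (Factorial.fact (2 * u)))
        * (PI ^ 2 / 36) ^ u <= / INR (Factorial.fact (s + 1)) * (4/9) ^ u).
  { intros u Hu. destruct (inner_coef_bound s u) as [T0 T1]; [lia|].
    assert (F1 : 1 <= INR (Factorial.fact (2 * u))).
    { apply (le_INR 1). pose proof (Factorial.lt_O_fact (2 * u)). lia. }
    pose proof (fact_INR_pos (s + u + 1)).
    replace ((-1) ^ u * rising (- INR s) u
               / (INR (Factorial.fact (s + u + 1)) * INR (Factorial.fact (2 * u))))
      with (inner_coef s u / INR (Factorial.fact (2 * u))) by (unfold inner_coef; field; lra).
    assert (0 <= (PI ^ 2 / 36) ^ u <= (4/9) ^ u) by (split; [apply pow_le | apply pow_incr]; lra).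
    assert (0 <= inner_coef s u / INR (Factorial.fact (2 * u)) <= inner_coef s u).
    { split; [apply Rdiv_le_0_compat; lra|].
      apply Rmult_le_reg_r with (INR (Factorial.fact (2 * u))); [lra|].
      unfold Rdiv. rewrite Rmult_assoc, Rinv_l by lra. nra. }
    split; [apply Rmult_le_pos | apply Rmult_le_compat]; lra. }
  unfold S2_inner. split.
  - apply fsum_nonneg. intros; apply Hterm; auto.
  - eapply Rle_trans; [apply fsum_le; intros; apply Hterm; auto|].
    rewrite fsum_scal_l. pose proof (fsum_geom (s + 1) (4/9)).
    assert (0 <= (4/9) ^ (s + 1)) by (apply pow_le; lra).
    assert (fsum (s + 1) (fun u => (4/9) ^ u) <= 9/5) by lra.
    unfold Rdiv. rewrite Rmult_comm. apply Rmult_le_compat_r; [left; apply Rinv_0_lt_compat|]; assumption.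
Qed.

Definition S2_abs (t : nat) : R := fsum t (fun s => acoef s * bcoef (t - s - 1) * S2_inner s).

Lemma g_e2_S2_abs t : g_e2 t = S2_abs t / 24 ^ t.
Proof.
  unfold g_e2. replace ((-1) ^ (t - 1) / 24 ^ t * S2 t) with ((-1) ^ (t - 1) * S2 t / 24 ^ t)
    by (unfold Rdiv; ring).
  f_equal. unfold S2, S2_abs. rewrite <- fsum_scal_l. apply fsum_ext. intros i Hi.
  replace (t - 1)%nat with (i + (t - i - 1))%nat by lia. rewrite pow_add.
  unfold acoef, bcoef. fold (S2_inner i).
  set (p1 := (-1) ^ i). set (p2 := (-1) ^ (t - i - 1)).
  set (a := rising _ _). set (b := gbinom _ _). clearbody p1 p2 a b. ring.
Qed.

Lemma S2_abs_nonneg t : 0 <= S2_abs t.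
Proof.
  apply fsum_nonneg. intros i _.
  pose proof (acoef_pos i). pose proof (bcoef_pos (t - i - 1)). pose proof (S2_inner_bound i).
  apply Rmult_le_pos; [nra | lra].
Qed.

Lemma S2_abs_le t : S2_abs t <= 9/5 * sqrt (2 * INR t).
Proof.
  set (c := 9/5 * sqrt (2 * INR t)).
  assert (Hc : 0 <= c) by (pose proof (sqrt_pos (2 * INR t)); unfold c; lra).
  apply Rle_trans with (fsum t (fun s => c * afrac s)).
  - apply fsum_le. intros i Hi.
    pose proof (acoef_pos i). pose proof (S2_inner_bound i) as [C0 C1]. pose proof (fact_INR_pos (i + 1)).
    assert (Hb : bcoef (t - i - 1) <= sqrt (2 * INR t)).
    { eapply Rle_trans; [apply bcoef_le_sqrt | apply sqrt_le_1_alt].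
      assert (INR (2 * (t - i - 1) + 1) <= INR (2 * t)) by (apply le_INR; lia).
      rewrite plus_INR, !mult_INR in *. simpl in *. lra. }
    replace (c * afrac i) with (acoef i * sqrt (2 * INR t) * (9/5 / INR (Factorial.fact (i + 1))))
      by (unfold c, afrac; field; lra).
    pose proof (bcoef_pos (t - i - 1)).
    apply Rmult_le_compat; [nra | lra | apply Rmult_le_compat_l; lra | lra].
  - rewrite fsum_scal_l. pose proof (fsum_afrac_le1 t). nra.
Qed.

Lemma INR_S_le_pow2 j : INR j + 1 <= 2 ^ j.
Proof.
  induction j as [|j IH]; [simpl; lra|].
  rewrite S_INR. cbn [pow]. pose proof (pow_R1_Rle 2 j ltac:(lra)). lra.
Qed.

Lemma sqrt_shift_le k j : sqrt (2 * INR (k + j)) <= sqrt (2 * (INR k + 1)) * 2 ^ j.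
Proof.
  assert (0 <= 2 ^ j) by (apply pow_le; lra).
  pose proof (pos_INR k). pose proof (pos_INR j). pose proof (INR_S_le_pow2 j).
  rewrite <- (sqrt_square (2 ^ j)) by assumption.
  rewrite <- sqrt_mult by (try apply Rmult_le_pos; lra).
  assert (INR j + 1 <= 2 ^ j * 2 ^ j) by nra.
  apply sqrt_le_1_alt. rewrite plus_INR. nra.
Qed.

Lemma tail_term_bound n k j : (1 <= n)%nat ->
  0 <= tail_term n k j <= 9/5 * sqrt (2 * (INR k + 1)) / (24 ^ k * INR n ^ k) * (/12) ^ j.
Proof.
  intros Hn. unfold tail_term. rewrite g_e2_S2_abs.
  assert (HN : 1 <= INR n) by (apply (le_INR 1); auto).
  assert (1 <= INR n ^ k) by (apply pow_R1_Rle; auto).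
  assert (1 <= INR n ^ j) by (apply pow_R1_Rle; auto).
  assert (1 <= 24 ^ k) by (apply pow_R1_Rle; lra).
  assert (1 <= 24 ^ j) by (apply pow_R1_Rle; lra).
  assert (E12 : (/12) ^ j * 24 ^ j = 2 ^ j) by (rewrite <- Rpow_mult_distr; f_equal; lra).
  pose proof (S2_abs_nonneg (k + j)). pose proof (S2_abs_le (k + j)). pose proof (sqrt_shift_le k j).
  assert (HA : S2_abs (k + j) <= 9/5 * (sqrt (2 * (INR k + 1)) * 2 ^ j)) by lra.
  rewrite !pow_add, <- E12 in *.
  set (A := S2_abs (k + j)) in *. set (W := sqrt (2 * (INR k + 1))) in *.
  set (a := 24 ^ k) in *. set (b := 24 ^ j) in *. set (c := INR n ^ k) in *.
  set (d := INR n ^ j) in *. set (q := (/12) ^ j) in *.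
  clearbody A W a b c d q.
  replace (A / (a * b) / (c * d)) with (A / (a * b * c) / d) by (field; repeat split; lra).
  replace (9/5 * W / (a * c) * q) with (9/5 * (W * (q * b)) / (a * b * c)) by (field; repeat split; lra).
  assert (0 < a * b * c) by (repeat apply Rmult_lt_0_compat; lra).
  assert (0 <= A / (a * b * c)) by (apply Rdiv_le_0_compat; lra).
  assert (A / (a * b * c) <= 9/5 * (W * (q * b)) / (a * b * c))
    by (unfold Rdiv; apply Rmult_le_compat_r; [left; apply Rinv_0_lt_compat|]; lra).
  split; [apply Rdiv_le_0_compat; lra|].
  apply Rle_trans with (A / (a * b * c)); [|assumption].
  apply Rmult_le_reg_r with d; [lra|]. unfold Rdiv at 1. rewrite Rmult_assoc, Rinv_l by lra. nra.
Qed.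

Lemma tail_series_bounds n k : (1 <= n)%nat ->
  ex_series (tail_term n k) /\
  0 <= Series (tail_term n k) /\
  Series (tail_term n k) <= 108/55 * sqrt (2 * (INR k + 1)) / 24 ^ k / INR n ^ k.
Proof.
  intros Hn.
  set (K := 9/5 * sqrt (2 * (INR k + 1)) / (24 ^ k * INR n ^ k)).
  assert (HB : forall j, 0 <= tail_term n k j <= K * (/12) ^ j) by (intro; now apply tail_term_bound).
  assert (HG : is_series (fun j => K * (/12) ^ j) (K * / (1 - /12))).
  { apply (is_series_scal_l K (fun j => (/12) ^ j)). apply is_series_geom. rewrite Rabs_pos_eq; lra. }
  assert (HGex : ex_series (fun j => K * (/12) ^ j)) by (eexists; eauto).
  assert (Hex : ex_series (tail_term n k)).
  { apply (@ex_series_le R_AbsRing R_CompleteNormedModule _ (fun j => K * (/12) ^ j)); auto.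
    intro j. destruct (HB j). change (Rabs (tail_term n k j) <= K * (/12) ^ j).
    rewrite Rabs_pos_eq; lra. }
  split; [exact Hex|split].
  - rewrite <- (Rmult_0_l (Series (fun _ => 1))), <- Series_scal_l.
    apply Series_le; auto. intro j; destruct (HB j); lra.
  - replace (108/55 * sqrt (2 * (INR k + 1)) / 24 ^ k / INR n ^ k) with (K * / (1 - /12)).
    + rewrite <- (is_series_unique _ _ HG). apply Series_le; auto.
    + assert (0 < 24 ^ k) by (apply pow_lt; lra).
      assert (0 < INR n ^ k) by (apply pow_lt, lt_0_INR; lia).
      unfold K. field. lra.
Qed.

Lemma alpha_bounds : 0 < alpha <= 2/3.
Proof. unfold alpha. pose proof PI_4. pose proof PI_RGT_0. lra. Qed.

Lemma cosh_alpha_le : 0 < cosh alpha <= 2.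
Proof.
  unfold cosh. pose proof alpha_bounds. pose proof exp_le_3.
  assert (exp alpha <= exp 1) by (left; apply exp_increasing; lra).
  pose proof (exp_pos alpha). pose proof (exp_pos (- alpha)).
  assert (exp (- alpha) <= 1) by (rewrite <- exp_0; left; apply exp_increasing; lra).
  lra.
Qed.

(* From exp alpha >= 1 + alpha and exp (-alpha) <= 1/(1 + alpha). *)
Lemma sinh_alpha_div_ge : 4/5 <= sinh alpha / alpha.
Proof.
  pose proof alpha_bounds as [A0 A1]. unfold sinh. rewrite exp_Ropp.
  pose proof (exp_ineq1 alpha ltac:(lra)). set (y := exp alpha) in *.
  assert (/ y <= / (1 + alpha)) by (apply Rinv_le_contravar; lra).
  assert (/ (1 + alpha) * (1 + alpha) = 1) by (field; lra).
  apply Rmult_le_reg_r with alpha; [exact A0|].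
  replace ((y - / y) / 2 / alpha * alpha) with ((y - / y) / 2) by (field; lra).
  set (w := / (1 + alpha)) in *.
  assert (8/5 * alpha <= 1 + alpha - w) by (apply Rmult_le_reg_r with (1 + alpha); nra).
  lra.
Qed.

Lemma L2_neg k : L2 k < 0.
Proof.
  unfold L2. pose proof cosh_alpha_le.
  assert (0 < sqrt (INR k + 1)) by (apply sqrt_lt_R0; pose proof (pos_INR k); lra).
  assert (0 < 12 / (5 * sqrt (INR k + 1))) by (apply Rdiv_lt_0_compat; lra).
  assert (0 < / 24 ^ k) by (apply Rinv_0_lt_compat, pow_lt; lra).
  unfold Rdiv at 1. nra.
Qed.

Lemma U2_gt k : (1 <= k)%nat -> 108/55 * sqrt (2 * (INR k + 1)) / 24 ^ k < U2 k.
Proof.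
  intros Hk. unfold U2.
  pose proof (pos_INR k). assert (1 <= INR k) by (apply (le_INR 1); auto).
  set (Q := sqrt (INR k + 1)). set (W := sqrt (2 * (INR k + 1))).
  assert (HW : W = sqrt 2 * Q) by (apply sqrt_mult; lra).
  assert (HW2 : 2 <= W).
  { rewrite <- (sqrt_square 2) by lra. apply sqrt_le_1_alt. lra. }
  assert (HQ : 0 < Q) by (apply sqrt_lt_R0; lra).
  pose proof cosh_alpha_le. pose proof sinh_alpha_div_ge. pose proof alpha_bounds.
  replace (4 * sqrt 2 * sinh alpha / alpha * Q) with (4 * (sinh alpha / alpha) * W)
    by (rewrite HW; field; lra).
  assert (0 < 66 / (25 * Q)) by (apply Rdiv_lt_0_compat; lra).
  unfold Rdiv at 1 3. apply Rmult_lt_compat_r; [apply Rinv_0_lt_compat, pow_lt; lra|].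
  set (r := sinh alpha / alpha) in *. nra.
Qed.

Theorem mainTheorem17 (n k : nat) (hn : (1 <= n)%nat) (hk : (1 <= k)%nat) :
  ex_series (tail_term n k) /\
  L2 k / INR n ^ k < Series (tail_term n k) /\
  Series (tail_term n k) < U2 k / INR n ^ k.
Proof.
  destruct (tail_series_bounds n k hn) as [Hex [Hlo Hup]].
  assert (Hnk : 0 < / INR n ^ k) by (apply Rinv_0_lt_compat, pow_lt, lt_0_INR; lia).
  split; [exact Hex|split].
  - apply Rlt_le_trans with 0; [|exact Hlo].
    pose proof (L2_neg k). unfold Rdiv. nra.
  - eapply Rle_lt_trans; [exact Hup|].
    unfold Rdiv at 3 4. apply Rmult_lt_compat_r; [exact Hnk | now apply U2_gt].
Qed.
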